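(* Let $C>0$ and $\delta>0$, let $f \in C((0,\infty);(0,\infty))$ be asymptotically increasing with $\lim_{x\to\infty} f(x)/x = \infty$, and let $\psi \in C([-\delta,0];(0,\infty))$. Consider \[ z'(t) = C\int_{t-\delta}^t f(z(s))\,ds, \quad t\ge 0; \qquad z(t)=\psi(t), \quad t\in[-\delta,0]. \] If a solution satisfies $z \in C([-\delta,\infty);(0,\infty))$, then $z$ exhibits superexponential growth, i.e. $z(t)\to\infty$ as $t\to\infty$ and $\lim_{t\to\infty} z(t-\epsilon)/z(t) = 0$ for every $\epsilon>0$.
   Context: ''$f$ is asymptotically increasing'' means that there is a continuous increasing function $\phi:(0,\infty)\to(0,\infty)$ with $f(x)/\phi(x)\to 1$ as $x\to\infty$. *)

From Stdlib Require Import Reals Lra.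
From Coquelicot Require Import Coquelicot.
Open Scope R_scope.

Definition asymptotically_increasing (f : R -> R) : Prop :=
  exists phi : R -> R,
    (forall x, 0 < x -> continuous phi x /\ 0 < phi x) /\
    (forall x y, 0 < x -> x < y -> phi x < phi y) /\
    is_lim (fun x => f x / phi x) p_infty 1.

Definition continuous_on_set (D : R -> Prop) (g : R -> R) : Prop :=
  forall t, D t -> filterlim g (within D (locally t)) (locally (g t)).

(* Once z is past the delay, z' is C times an integral of the positive
   function f (z s) over a window of length delta, so z is nondecreasing.
   If z stayed bounded, f (z s) would stay above a positive minimum and z'
   above a positive constant, which is absurd; hence z -> oo.  Then, given
   K, eventually f (z s) >= K z s, so integrating z' over a window of length
   h <= min(eps/2, delta) ending at t gives z t >= C h^2 K z (t - eps), and
   K is arbitrary. *)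
From Stdlib Require Import Reals Lra Classical.
From Coquelicot Require Import Coquelicot.
Open Scope R_scope.

Lemma increment_ge_of_derive_ge (z dz : R -> R) (k x y : R) :
  x <= y ->
  (forall c, x <= c <= y -> is_derive z c (dz c)) ->
  (forall c, x <= c <= y -> k <= dz c) ->
  k * (y - x) <= z y - z x.
Proof.
  intros Hxy Hd Hk.
  destruct (MVT_gen z x y dz) as [c [Hc ->]];
    rewrite ?Rmin_left, ?Rmax_right in * by lra.
  - intros c Hc; apply Hd; lra.
  - intros c Hc; apply continuity_pt_filterlim.
    apply (ex_derive_continuous (V := R_NormedModule)).
    eexists; apply Hd; lra.
  - apply Rmult_le_compat_r; [lra | apply Hk; lra].
Qed.

Lemma RInt_ge_tail (g : R -> R) (a b h m : R) :
  0 < h <= b - a -> ex_RInt g a b ->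
  (forall s, a <= s <= b -> 0 <= g s) ->
  (forall s, b - h < s < b -> m <= g s) ->
  h * m <= RInt g a b.
Proof.
  intros Hh Hg Hg0 Hm.
  assert (Hg1 : ex_RInt g a (b - h))
    by (apply (ex_RInt_Chasles_1 (V := R_CompleteNormedModule) _ _ _ b);
        [lra | assumption]).
  assert (Hg2 : ex_RInt g (b - h) b)
    by (apply (ex_RInt_Chasles_2 (V := R_CompleteNormedModule) _ a); [lra | assumption]).
  rewrite <- (RInt_Chasles g a (b - h) b) by assumption.
  assert (Hhead : 0 <= RInt g a (b - h))
    by (apply RInt_ge_0; [lra | assumption | intros s Hs; apply Hg0; lra]).
  assert (Htail : RInt (fun _ => m) (b - h) b <= RInt g (b - h) b)
    by (apply RInt_le; [lra | apply ex_RInt_const | assumption | assumption]).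
  rewrite RInt_const in Htail.
  unfold scal, plus in *; simpl in *; unfold mult in *; simpl in *.
  replace (b - (b - h)) with h in Htail by ring.
  lra.
Qed.

Lemma superlinear_eventually_gt (f : R -> R) :
  is_lim (fun x => f x / x) p_infty p_infty ->
  forall K, exists X, forall x, X < x -> K * x < f x.
Proof.
  intros Hlim K.
  apply is_lim_spec in Hlim; destruct (Hlim K) as [X HX].
  exists (Rmax X 1); intros x Hx.
  assert (Hx0 : 0 < x) by (generalize (Rmax_r X 1); lra).
  assert (HKx : K < f x / x) by (apply HX; generalize (Rmax_l X 1); lra).
  apply Rlt_div_r in HKx; lra.
Qed.

Section DelayedIntegralGrowth.

Variables (C delta : R) (f z : R -> R).
Hypothesis C_pos : 0 < C.
Hypothesis delta_pos : 0 < delta.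
Hypothesis f_cont_pos : forall x, 0 < x -> continuous f x /\ 0 < f x.
Hypothesis z_pos : forall t, - delta <= t -> 0 < z t.
Hypothesis z_derive : forall t, 0 < t ->
  is_derive z t (C * RInt (fun s => f (z s)) (t - delta) t).

Lemma z_continuous t : 0 < t -> continuous z t.
Proof.
  intros Ht; apply (ex_derive_continuous (V := R_NormedModule)).
  eexists; exact (z_derive t Ht).
Qed.

Lemma ex_RInt_fz a b : 0 < a <= b -> ex_RInt (fun s => f (z s)) a b.
Proof.
  intros Hab; apply (ex_RInt_continuous (V := R_CompleteNormedModule)).
  intros s Hs; rewrite Rmin_left in Hs by lra.
  apply continuous_comp; [apply z_continuous; lra | apply f_cont_pos, z_pos; lra].
Qed.

Lemma z_increment_ge x y h m :
  delta < x <= y -> 0 < h <= delta ->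
  (forall s, x - h < s < y -> m <= f (z s)) ->
  C * (h * m) * (y - x) <= z y - z x.
Proof.
  intros Hxy Hh Hm.
  apply increment_ge_of_derive_ge
    with (dz := fun c => C * RInt (fun s => f (z s)) (c - delta) c);
    [lra | intros c Hc; apply z_derive; lra | ].
  intros c Hc; apply Rmult_le_compat_l; [lra | ].
  apply RInt_ge_tail; [lra | apply ex_RInt_fz; lra | | ].
  - intros s Hs; apply Rlt_le, f_cont_pos, z_pos; lra.
  - intros s Hs; apply Hm; lra.
Qed.

Lemma z_nondecreasing x y : delta < x <= y -> z x <= z y.
Proof.
  intros Hxy.
  assert (Hinc : C * (delta * 0) * (y - x) <= z y - z x).
  { apply z_increment_ge; [lra | lra | ].
    intros s Hs; apply Rlt_le, f_cont_pos, z_pos; lra. }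
  lra.
Qed.

Lemma z_unbounded M : exists t, delta < t /\ M < z t.
Proof.
  apply NNPP; intros Hno.
  assert (bound : forall t, delta < t -> z t <= M).
  { intros t Ht; apply Rnot_lt_le; intros HM; apply Hno; exists t; split; assumption. }
  set (a := z (2 * delta)).
  assert (Ha : 0 < a) by (apply z_pos; lra).
  assert (HaM : a <= M) by (apply bound; lra).
  destruct (continuity_ab_min f a M HaM) as [xm [Hmin Hxm]].
  { intros c Hc; apply continuity_pt_filterlim, f_cont_pos; lra. }
  assert (Hfxm : 0 < f xm) by (apply f_cont_pos; lra).
  set (k := C * (delta * f xm)).
  assert (Hk : 0 < k) by (unfold k; repeat apply Rmult_lt_0_compat; lra).
  set (t := 3 * delta + M / k + 1).
  assert (HMk : 0 <= M / k) by (apply Rdiv_le_0_compat; lra).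
  assert (Hinc : k * (t - 3 * delta) <= z t - z (3 * delta)).
  { apply z_increment_ge; [unfold t; lra | lra | ].
    intros s Hs; apply Hmin; split.
    - apply z_nondecreasing; lra.
    - apply bound; lra. }
  assert (Hkt : k * (t - 3 * delta) = M + k) by (unfold t; field; lra).
  assert (Hz3 : 0 < z (3 * delta)) by (apply z_pos; lra).
  assert (Hzt : z t <= M) by (apply bound; unfold t; lra).
  lra.
Qed.

Lemma z_eventually_gt M : exists T, delta < T /\ forall t, T < t -> M < z t.
Proof.
  destruct (z_unbounded M) as [T [HT HMT]].
  exists T; split; [assumption | ].
  intros t Ht; apply (Rlt_le_trans _ (z T)); [assumption | apply z_nondecreasing; lra].
Qed.

Lemma z_lim_infty : is_lim z p_infty p_infty.
Proof.
  apply is_lim_spec; intros M.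
  destruct (z_eventually_gt M) as [T [_ HT]]; exists T; exact HT.
Qed.

Hypothesis f_superlinear : is_lim (fun x => f x / x) p_infty p_infty.

Lemma z_lag_ratio_lt eps eta : 0 < eps -> 0 < eta ->
  exists T, forall t, T < t -> 0 < z (t - eps) / z t < eta.
Proof.
  intros Heps Heta.
  set (h := Rmin (eps / 2) delta).
  assert (Hh1 : h <= eps / 2) by (apply Rmin_l).
  assert (Hh2 : h <= delta) by (apply Rmin_r).
  assert (Hh0 : 0 < h) by (apply Rmin_glb_lt; lra).
  set (K := / (eta * C * h * h)).
  destruct (superlinear_eventually_gt f f_superlinear K) as [X HX].
  destruct (z_eventually_gt X) as [T [HT HzT]].
  exists (T + eps); intros t Ht.
  assert (Hze : 0 < z (t - eps)) by (apply z_pos; lra).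
  assert (Hzh : 0 < z (t - h)) by (apply z_pos; lra).
  assert (Hzt : 0 < z t) by (apply z_pos; lra).
  assert (Hinc : C * (h * (K * z (t - eps))) * (t - (t - h)) <= z t - z (t - h)).
  { apply z_increment_ge; [lra | lra | ].
    intros s Hs.
    assert (Hzs : K * z s < f (z s)) by (apply HX, HzT; lra).
    assert (Hmono : z (t - eps) <= z s) by (apply z_nondecreasing; lra).
    assert (HK : 0 < K)
      by (unfold K; apply Rinv_0_lt_compat; repeat apply Rmult_lt_0_compat; lra).
    nra. }
  assert (Hgain : C * (h * (K * z (t - eps))) * (t - (t - h)) = z (t - eps) / eta)
    by (unfold K; field; lra).
  split; [apply Rdiv_lt_0_compat; assumption | ].
  apply Rlt_div_l; [assumption | ].
  assert (Hlt : z (t - eps) / eta < z t) by lra.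
  apply (Rlt_div_l _ _ _ Heta) in Hlt; lra.
Qed.

Lemma z_lag_ratio_lim eps : 0 < eps -> is_lim (fun t => z (t - eps) / z t) p_infty 0.
Proof.
  intros Heps; apply is_lim_spec; intros [eta Heta].
  destruct (z_lag_ratio_lt eps eta Heps Heta) as [T HT].
  exists T; intros t Ht; simpl.
  destruct (HT t Ht) as [Hpos Hlt].
  rewrite Rminus_0_r, Rabs_pos_eq; lra.
Qed.

End DelayedIntegralGrowth.

Theorem lemma6p1 (C delta : R) (f psi z : R -> R) :
  0 < C -> 0 < delta ->
  (* f in C((0,oo);(0,oo)) *)
  (forall x, 0 < x -> continuous f x /\ 0 < f x) ->
  asymptotically_increasing f ->
  is_lim (fun x => f x / x) p_infty p_infty ->
  (* psi in C([-delta,0];(0,oo)) *)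
  continuous_on_set (fun t => - delta <= t <= 0) psi ->
  (forall t, - delta <= t <= 0 -> 0 < psi t) ->
  (* z in C([-delta,oo);(0,oo)) solves the problem *)
  continuous_on_set (fun t => - delta <= t) z ->
  (forall t, - delta <= t -> 0 < z t) ->
  (forall t, - delta <= t <= 0 -> z t = psi t) ->
  (forall t, 0 < t ->
     is_derive z t (C * RInt (fun s => f (z s)) (t - delta) t)) ->
  is_lim z p_infty p_infty /\
  (forall eps, 0 < eps -> is_lim (fun t => z (t - eps) / z t) p_infty 0).
Proof.
  intros HC Hdelta Hf _ Hsuper _ _ _ Hz _ Hder.
  split.
  - exact (z_lim_infty C delta f z HC Hdelta Hf Hz Hder).
  - exact (z_lag_ratio_lim C delta f z HC Hdelta Hf Hz Hder Hsuper).
Qed.
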